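(* Let $d\ge 1$ and $n\ge 1$. For a sequence $w=(i_1,\dots,i_n)$ which is a permutation of $[n]$, let $M_w(f_1,\dots,f_n)=f_{i_1}\vartriangleleft(f_{i_2}\vartriangleleft(\cdots\vartriangleleft(f_{i_{n-1}}\vartriangleleft f_{i_n})\cdots))$ and let $\ell_w\in\mathrm{RT}(n)$ be the linear tree with root $i_1$ in which $i_{m+1}$ is the unique child of $i_m$ for $m<n$. Then $w\mapsto\ell_w$ is a bijection from permutations of $[n]$ onto the linear trees in $\mathrm{RT}(n)$, $F(\ell_w)(f_1,\dots,f_n)=M_w(f_1,\dots,f_n)$ for all $f_1,\dots,f_n\in\mathcal{C}_d$, and for every family of real coefficients $(\lambda_w)_w$, the expression $\sum_w\lambda_w M_w$ is a left identity of the Witt algebra $W_d$ (i.e. vanishes for all $f_1,\dots,f_n\in W_d$) if and only if $\sum_w\lambda_w F(\ell_w)=0$ as a map $\mathcal{C}_d^n\to\mathcal{C}_d$. Hence left identities of $W_d$ correspond one-to-one to linear relations among elementary differentials of linear trees.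
   Context: A rooted tree on a finite vertex set $V\subset\mathbb{N}$ is a set $E$ of ordered pairs (an edge $(v,w)$ means $w$ is a child of $v$) such that exactly one vertex (the root) has no parent, every other vertex has exactly one parent, and every vertex is connected to the root by following parents; it is linear if every vertex has at most one child. $\mathrm{RT}(n)$ is the set of rooted trees on $[n]$; $\tau_v$ is the subtree of $v$ and its descendants. $\mathcal{C}_d=C^\infty(\mathbb{R}^d,\mathbb{R}^d)$, $g_j$ the $j$-th coordinate, $\partial_j=\partial/\partial x_j$. For $\tau$ with root $r$ whose children are $v_1,\dots,v_k$, recursively $F(\tau)((f^i)_{i\in V})=\sum_{j_1,\dots,j_k=1}^d F(\tau_{v_1})(\cdots)_{j_1}\cdots F(\tau_{v_k})(\cdots)_{j_k}\,\partial_{j_1}\cdots\partial_{j_k}f^r$, where $F(\tau_{v_m})$ is evaluated on the $f^i$ with $i$ a vertex of $\tau_{v_m}$ (single vertex: $F(\tau)=f^r$). The Witt algebra $W_d$ is the space of polynomial maps $\mathbb{R}^d\to\mathbb{R}^d$ with product $f\vartriangleleft g=\sum_{i=1}^d g_i\,\partial_i f$ (the same formula defines $\vartriangleleft$ on $\mathcal{C}_d$). A left identity of arity $n$ is a linear combination of the multilinear expressions $M_w$ (all compositions in the right input) that vanishes identically on $W_d$. *)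

From HB Require Import structures.
From mathcomp Require Import all_boot all_order all_algebra all_fingroup.
From mathcomp Require Import all_classical all_reals all_analysis.
From mathcomp Require mpoly.

Set Implicit Arguments.
Unset Strict Implicit.
Unset Printing Implicit Defensive.

Import Order.TTheory GRing.Theory Num.Theory.
Import numFieldNormedType.Exports.
Local Open Scope ring_scope.

Definition vfield (R : realType) (d : nat) := 'rV[R]_d -> 'rV[R]_d.

Definition ebasis (R : realType) (d : nat) (j : 'I_d) : 'rV[R]_d :=
  delta_mx 0 j.

Definition partial (R : realType) (d : nat) (j : 'I_d) (g : vfield R d)
  : vfield R d := fun x => derive g x (ebasis R j).

Definition iter_partial (R : realType) (d : nat) (js : seq 'I_d)
  (g : vfield R d) : vfield R d :=
  foldr (fun j h => partial j h) g js.

Definition smooth (R : realType) (d : nat) (g : vfield R d) : Prop :=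
  forall js : seq 'I_d,
    continuous (iter_partial js g) /\
    forall (j : 'I_d) (x : 'rV[R]_d), derivable (iter_partial js g) x (ebasis R j).

Definition witt (R : realType) (d : nat) (g : vfield R d) : Prop :=
  forall i : 'I_d, exists p : mpoly.mpoly d R,
    forall x : 'rV[R]_d, g x 0 i = mpoly.meval (fun k => x 0 k) p.

Definition tri (R : realType) (d : nat) (f g : vfield R d) : vfield R d :=
  fun x => \sum_(i < d) g x 0 i *: partial i f x.

Fixpoint Mseq (R : realType) (d n : nat) (f : 'I_n -> vfield R d)
  (s : seq 'I_n) : vfield R d :=
  match s with
  | [::] => fun _ => 0
  | [:: i] => f i
  | i :: s' => tri (f i) (Mseq f s')
  end.

(* the sequence w = (w 0, w 1, ..., w (n-1)) of a permutation of [n]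
   (vertices / indices are 0-based: [n] = 'I_n) *)
Definition Mw (R : realType) (d n : nat) (w : 'S_n) (f : 'I_n -> vfield R d)
  : vfield R d := Mseq f [seq w i | i <- enum 'I_n].

(* an edge (v, w) \in E means w is a child of v *)
Definition parents n (E : {set 'I_n * 'I_n}) (w : 'I_n) : {set 'I_n} :=
  [set v | (v, w) \in E].
Definition children n (E : {set 'I_n * 'I_n}) (v : 'I_n) : {set 'I_n} :=
  [set w | (v, w) \in E].

Definition to_parent n (E : {set 'I_n * 'I_n}) : rel 'I_n :=
  fun a b => (b, a) \in E.

Definition rooted_tree n (E : {set 'I_n * 'I_n}) : Prop :=
  exists r : 'I_n,
    [/\ (forall v, #|parents E v| = 0%N <-> v = r),
        (forall v, v != r -> #|parents E v| = 1%N)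
      & (forall v, connect (to_parent E) v r)].

Definition linear_tree n (E : {set 'I_n * 'I_n}) : Prop :=
  rooted_tree E /\ forall v, (#|children E v| <= 1)%N.

Definition root_of n (E : {set 'I_n * 'I_n}) : option 'I_n :=
  [pick r | #|parents E r| == 0%N].

(* F(tau_v)(f) computed recursively with fuel k (k >= depth suffices):
   F(tau_v) = sum_{j_1..j_k} F(tau_{v_1})_{j_1} ... F(tau_{v_k})_{j_k}
                d_{j_1} ... d_{j_k} f^v,  v_1, ..., v_k the children of v *)
Fixpoint Fsub (R : realType) (d n : nat) (E : {set 'I_n * 'I_n})
  (f : 'I_n -> vfield R d) (k : nat) (v : 'I_n) : vfield R d :=
  match k with
  | 0 => f v
  | k'.+1 =>
    let cs := enum (children E v) in
    fun x =>
      \sum_(t : (size cs).-tuple 'I_d)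
        (\prod_(m < size cs) Fsub E f k' (nth v cs m) x 0 (tnth t m))
          *: iter_partial t (f v) x
  end.

Definition Ftree (R : realType) (d n : nat) (E : {set 'I_n * 'I_n})
  (f : 'I_n -> vfield R d) : vfield R d :=
  match root_of E with
  | Some r => Fsub E f n r
  | None => fun _ => 0
  end.

Definition lw n (w : 'S_n) : {set 'I_n * 'I_n} :=
  [set e | [exists i : 'I_n, exists j : 'I_n,
             (nat_of_ord j == i.+1) && (e == (w i, w j))]].

(* Along a linear tree every vertex has at most one child, so the recursion
   defining F(l_w) contracts one first derivative of f_(w_m) with the value of
   the subtree below it, which is the recursion M_w = f_(w_1) <| M_(w_2 ... w_n);
   and a linear tree on [n] is a path visiting [n] in some order w.
   Hence M_w(f)(x) only involves the values f_i(x) and the first partials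
   d_j f_i(x).  The tangent affine maps of the f_i at x are polynomial and
   smooth and carry the same data, so a combination of the M_w vanishes on
   W_d exactly when it vanishes on C_d. *)

From mathcomp Require Import all_boot all_algebra all_fingroup.
From mathcomp Require Import mpoly.
From mathcomp Require Import all_classical all_reals all_analysis.

Import GRing.Theory.
Import numFieldNormedType.Exports.

Section TupleSums.
Local Open Scope ring_scope.

Lemma sum_tuple0 (T : finType) (V : nmodType) (F : 0.-tuple T -> V) :
  \sum_(t : 0.-tuple T) F t = F [tuple].
Proof. by rewrite (big_pred1 [tuple]) // => t; apply/esym/eqP; exact: tuple0. Qed.

Lemma sum_tuple1 (T : finType) (V : nmodType) (F : 1.-tuple T -> V) :
  \sum_(t : 1.-tuple T) F t = \sum_(j : T) F [tuple j].
Proof.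
rewrite (reindex (fun j : T => [tuple j])) //.
exists (fun t => thead t) => [j _ | t _].
  by rewrite /thead tnth0.
by apply: val_inj; case: t => -[|a [|b s]].
Qed.

End TupleSums.

Lemma drop_enum_ord {n} (i : 'I_n) :
  drop i (enum 'I_n) = i :: drop i.+1 (enum 'I_n).
Proof. by rewrite (drop_nth i) ?size_enum_ord // nth_ord_enum. Qed.

Section AffineMaps.
Context {R : realType} {d : nat}.
Local Open Scope ring_scope.
Local Open Scope classical_set_scope.

Definition affine (c : 'rV[R]_d) (Q : 'M[R]_d) : vfield R d := fun y => c + y *m Q.

Global Instance is_derive_affine c Q a v : is_derive a v (affine c Q) (v *m Q).
Proof.
have quotient_cst :
    (fun h : R => h^-1 *: ((affine c Q \o shift a) (h *: v) - affine c Q a))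
      @ 0^' --> v *m Q.
  apply: cvg_near_cst; near=> h.
  rewrite /affine /= mulmxDl opprD addrACA subrr add0r addrK -scalemxAl.
  rewrite scalerA mulVf ?scale1r //.
  by near: h; exact: nbhs_dnbhs_neq.
by split; [exact: cvgP quotient_cst | exact: cvg_lim quotient_cst].
Unshelve. all: by end_near.
Qed.

Lemma partial_affine c Q j : partial j (affine c Q) = affine (row j Q) 0.
Proof.
by apply: funext => y; rewrite /partial derive_val /affine mulmx0 addr0 rowE.
Qed.

Lemma affine_continuous c Q : continuous (affine c Q).
Proof.
have -> : affine c Q = fun y => c + \sum_(k <- enum 'I_d) y 0 k *: row k Q.
  by apply: funext => y; rewrite /affine mulmx_sum_row big_enum.
have lin : continuous (fun y : 'rV[R]_d => \sum_(k <- enum 'I_d) y 0 k *: row k Q).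
  apply: continuous_big => [|k _ y]; first exact: add_continuous.
  apply: (@continuous_comp _ _ _ (fun y : 'rV[R]_d => y 0 k)
                                 (fun a : R => a *: row k Q)).
    exact: coord_continuous.
  exact: scalel_continuous.
move=> y; apply: (@continuousD _ _ _ (cst c)); [exact: cst_continuous | exact: lin].
Qed.

Lemma affine_smooth c Q : smooth (affine c Q).
Proof.
move=> js.
have [c' [Q' ->]] : exists c' Q', iter_partial js (affine c Q) = affine c' Q'.
  elim: js => [|j js [c' [Q' IH]]]; first by exists c, Q.
  by exists (row j Q'), 0; rewrite /= IH partial_affine.
by split => [|j x]; [exact: affine_continuous | exact: ex_derive].
Qed.

Lemma affine_witt c Q : witt (affine c Q).
Proof.
move=> i; exists (mpolyC d (c 0 i) + \sum_(k < d) Q k i *: mpolyX R (mnm1 k)) => x.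
rewrite mevalD mevalC raddf_sum /affine !mxE.
by congr (_ + _); apply: eq_bigr => k _; rewrite /= mevalZ mevalXU mulrC.
Qed.

End AffineMaps.

Section LinearTreeOfPerm.
Context {n : nat}.
Implicit Types (w : 'S_n) (i j : 'I_n).

Lemma lw_edge w i j : ((w i, w j) \in lw w) = (val j == i.+1).
Proof.
rewrite inE; apply/existsP/eqP => [[i' /existsP[j' /andP[/eqP ji' /eqP[]]]] | ji].
  by move=> /perm_inj -> /perm_inj ->.
by exists i; apply/existsP; exists j; rewrite ji !eqxx.
Qed.

Lemma parents_lw w i : parents (lw w) (w i) = w @: [set j : 'I_n | val i == j.+1].
Proof.
apply/setP => u; rewrite -(permKV w u) mem_imset; last exact: perm_inj.
by rewrite /parents finset.in_set lw_edge finset.in_set.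
Qed.

Lemma card_ord_eq m : #|[set j : 'I_n | val j == m]| = (m < n).
Proof.
case: ltnP => [lt_mn | le_nm]; last first.
  apply/eqP; rewrite cards_eq0; apply/eqP/setP => j.
  by rewrite !inE ltn_eqF //; exact: leq_trans (ltn_ord j) le_nm.
rewrite -[RHS]/1%N -(cards1 (Ordinal lt_mn)); apply: eq_card => j.
by rewrite !inE.
Qed.

Lemma card_parents_lw w i : #|parents (lw w) (w i)| = (val i != 0).
Proof.
rewrite parents_lw card_imset; last exact: perm_inj.
case: i => [[|k] lt_kn] /=.
  by apply/eqP; rewrite cards_eq0; apply/eqP/setP => j; rewrite !inE.
transitivity #|[set j : 'I_n | val j == k]|.
  by apply: eq_card => j; rewrite !inE eqSS eq_sym.
by rewrite card_ord_eq (ltnW lt_kn).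
Qed.

Lemma children_lw_succ w i (lt_in : i.+1 < n) :
  children (lw w) (w i) = [set w (Ordinal lt_in)].
Proof.
apply/setP => u; rewrite -(permKV w u) /children finset.in_set lw_edge.
by rewrite finset.in_set1 (inj_eq perm_inj) -val_eqE.
Qed.

Lemma children_lw_last w i : n <= i.+1 -> children (lw w) (w i) = finset.set0.
Proof.
move=> le_ni; apply/setP => u.
rewrite -(permKV w u) /children finset.in_set lw_edge inE.
by rewrite ltn_eqF // (leq_trans (ltn_ord _) le_ni).
Qed.

Lemma card_children_lw w i : #|children (lw w) (w i)| = (i.+1 < n).
Proof.
case: ltnP => [lt_in | le_ni].
  by rewrite children_lw_succ cards1.
by rewrite children_lw_last ?cards0.
Qed.

End LinearTreeOfPerm.

Section LinearTreeOfPermSucc.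
Context {n : nat}.
Implicit Types (w : 'S_n.+1) (i : 'I_n.+1).
Local Open Scope group_scope.

Lemma parents_lw_eq0 w v : #|parents (lw w) v| = 0%N <-> v = w ord0.
Proof.
rewrite -(permKV w v) card_parents_lw; split => [|/perm_inj ->//].
by case: (w^-1 v) => -[|k] lt_kn //= _; congr (w _); apply: val_inj.
Qed.

Lemma connect_lw_root w i : connect (to_parent (lw w)) (w i) (w ord0).
Proof.
case: i => k; elim: k => [|k IH] lt_kn.
  by apply: eq_connect0; congr (w _); apply: val_inj.
apply: connect_trans (IH (ltnW lt_kn)); apply: connect1.
by rewrite /to_parent lw_edge.
Qed.

Lemma lw_linear_tree w : linear_tree (lw w).
Proof.
split=> [|v]; last by rewrite -(permKV w v) card_children_lw leq_b1.
exists (w ord0); split=> [v|v|v]; first exact: parents_lw_eq0.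
  by rewrite -(permKV w v) card_parents_lw (inj_eq perm_inj) -val_eqE => /negPf ->.
by rewrite -(permKV w v); exact: connect_lw_root.
Qed.

Lemma lw_inj : injective (@lw n.+1).
Proof.
move=> w1 w2 eq_lw; apply/permP => -[k]; elim: k => [|k IH] lt_kn.
  have -> : Ordinal lt_kn = ord0 by apply: val_inj.
  by apply/(parents_lw_eq0 w2); rewrite -eq_lw; apply/(parents_lw_eq0 w1).
have edge := lw_edge w1 (Ordinal (ltnW lt_kn)) (Ordinal lt_kn).
rewrite eq_lw IH eqxx -[w1 _](permKV w2) lw_edge in edge.
by apply: (canRL (permKV w2)); apply: val_inj; apply/eqP.
Qed.

End LinearTreeOfPermSucc.

Section LinearTreeToPerm.
Context {n : nat} (E : {set 'I_n.+1 * 'I_n.+1}) (r : 'I_n.+1).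
Hypotheses (root_parentless : forall v, #|parents E v| = 0%N <-> v = r)
  (nonroot_parent : forall v, v != r -> #|parents E v| = 1%N)
  (connect_root : forall v, connect (to_parent E) v r)
  (children_le1 : forall v, #|children E v| <= 1).

(* A vertex without children is mapped to itself. *)
Definition next_vertex u : 'I_n.+1 := odflt u [pick v in children E u].

Lemma next_vertexE {u v} : (u, v) \in E -> next_vertex u = v.
Proof.
move=> uv; have v_child : v \in children E u by rewrite inE.
rewrite /next_vertex; case: pickP => [c c_child | /(_ v)]; last by rewrite v_child.
by apply: (card_le1_eqP (children_le1 u)).
Qed.

Lemma next_vertex_edge u : next_vertex u != u -> (u, next_vertex u) \in E.
Proof. by rewrite /next_vertex; case: pickP => [v | _] /=; rewrite ?inE ?eqxx. Qed.

Lemma root_no_parent a : (a, r) \notin E.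
Proof.
apply/negP => ar; have /eqP := proj2 (root_parentless r) erefl.
by rewrite cards_eq0 => /eqP/setP/(_ a); rewrite !inE ar.
Qed.

Lemma parent_unique {a a' b} : (a, b) \in E -> (a', b) \in E -> a = a'.
Proof.
move=> ab a'b; have b_nonroot : b != r.
  by apply: contraTneq ab => ->; exact: root_no_parent.
have /cards1P [p p_parents] := introT eqP (nonroot_parent _ b_nonroot).
have : a \in parents E b by rewrite inE.
have : a' \in parents E b by rewrite inE.
by rewrite p_parents !inE => /eqP -> /eqP ->.
Qed.

Lemma fconnect_next_root v : fconnect next_vertex r v.
Proof.
have edge_next : subrel [rel x y | (x, y) \in E] (fconnect next_vertex).
  by move=> x y /= /next_vertexE <-; exact: fconnect1.
apply: (connect_sub edge_next).
by rewrite (connect_rev (to_parent E) r v) /= connect_root.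
Qed.

Lemma order_next_root : fingraph.order next_vertex r = n.+1.
Proof.
rewrite -[RHS](card_ord n.+1); apply: eq_card => v.
by rewrite inE fconnect_next_root.
Qed.

Definition walk (i : 'I_n.+1) : 'I_n.+1 := iter i next_vertex r.

Lemma walk_inj : injective walk.
Proof.
have findex_walk i : findex next_vertex r (walk i) = i.
  by rewrite findex_iter // order_next_root.
by move=> i j /(congr1 (findex next_vertex r)); rewrite !findex_walk => /val_inj.
Qed.

Definition walk_perm : 'S_n.+1 := perm walk_inj.

Lemma lw_walk_sub {u v} : (u, v) \in lw walk_perm -> (u, v) \in E.
Proof.
rewrite -(permKV walk_perm u) -(permKV walk_perm v).
move: (walk_perm^-1 u)%g (walk_perm^-1 v)%g => i j; rewrite lw_edge => /eqP ji.
have step : walk_perm j = next_vertex (walk_perm i) by rewrite !permE /walk ji.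
rewrite step; apply: next_vertex_edge; rewrite -step (inj_eq perm_inj).
by apply/eqP => eq_ji; move: ji; rewrite eq_ji; exact: n_Sn.
Qed.

Lemma lw_walk : lw walk_perm = E.
Proof.
apply/setP => -[a b]; apply/idP/idP => [|ab]; first exact: lw_walk_sub.
rewrite -(permKV walk_perm b) in ab *.
case: (unliftP ord0 (walk_perm^-1 b)%g) => [j ->|eq0] in ab *.
  have parent : (walk_perm (widen_ord (leqnSn n) j), walk_perm (lift ord0 j))
                  \in lw walk_perm by rewrite lw_edge /= /bump add1n.
  by rewrite (parent_unique ab (lw_walk_sub parent)).
by move: ab; rewrite eq0 permE (negbTE (root_no_parent a)).
Qed.

End LinearTreeToPerm.

Lemma lw_surj {n} (E : {set 'I_n.+1 * 'I_n.+1}) :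
  linear_tree E -> exists w : 'S_n.+1, lw w = E.
Proof.
by case=> -[r [root_parentless nonroot_parent connect_root]] children_le1;
  eexists; apply: lw_walk.
Qed.

Section ElementaryDifferentialLinearTree.
Local Open Scope ring_scope.

Context {R : realType} {d n : nat}.
Implicit Types (w : 'S_n) (i : 'I_n).

Lemma Mseq_cons (f : 'I_n -> vfield R d) i s :
  s != [::] -> Mseq f (i :: s) = tri (f i) (Mseq f s).
Proof. by case: s. Qed.

Lemma Fsub_lw w (f : 'I_n -> vfield R d) k i : (n <= i + k)%N ->
  Fsub (lw w) f k (w i) = Mseq f (map w (drop i (enum 'I_n))).
Proof.
elim: k i => [|k IH] i le_n_ik.
  by move: le_n_ik; rewrite addn0 leqNgt ltn_ord.
case: (ltnP i.+1 n) => [lt_in | le_ni].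
  rewrite drop_enum_ord map_cons Mseq_cons; last first.
    by rewrite (drop_enum_ord (Ordinal lt_in)).
  rewrite -(IH (Ordinal lt_in)); last by rewrite addSnnS.
  apply: funext => x /=.
  rewrite children_lw_succ enum_set1 /= sum_tuple1.
  by apply: eq_bigr => j _; rewrite big_ord1.
rewrite drop_enum_ord drop_oversize ?size_enum_ord //; apply: funext => x /=.
by rewrite children_lw_last // enum_set0 /= sum_tuple0 big_ord0 scale1r.
Qed.

End ElementaryDifferentialLinearTree.

(* No smoothness hypothesis: [partial] is total, so this holds for all maps. *)
Lemma Ftree_lw {R : realType} {d n : nat} (w : 'S_n.+1)
    (f : 'I_n.+1 -> vfield R d) :
  Ftree (lw w) f = Mw w f.
Proof.
rewrite /Ftree /root_of; case: pickP => [r /eqP /parents_lw_eq0 -> | /(_ (w ord0))].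
  by rewrite (Fsub_lw _ _ _ ord0) ?drop0.
by rewrite (proj2 (parents_lw_eq0 _ _) erefl) eqxx.
Qed.

Section TangentAffineMap.
Context {R : realType} {d : nat}.
Local Open Scope ring_scope.

Lemma Mseq_local {n} (f g : 'I_n -> vfield R d) x :
    (forall i, f i x = g i x) ->
    (forall i j, partial j (f i) x = partial j (g i) x) ->
  forall s, Mseq f s x = Mseq g s x.
Proof.
move=> eq_val eq_partial; elim=> [|i [|j s] IH]; [by [] | exact: eq_val |].
rewrite (Mseq_cons f i) ?(Mseq_cons g i) // /tri; cbv beta; apply: eq_bigr => k _.
by rewrite IH eq_partial.
Qed.

Definition partial_mx (g : vfield R d) x : 'M[R]_d :=
  \matrix_(j, k) partial j g x 0 k.

Definition tangent_map (g : vfield R d) x : vfield R d :=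
  affine (g x - x *m partial_mx g x) (partial_mx g x).

Lemma tangent_map_at g x : tangent_map g x x = g x.
Proof. by rewrite /tangent_map /affine subrK. Qed.

Lemma partial_tangent_map g x j : partial j (tangent_map g x) x = partial j g x.
Proof.
by rewrite partial_affine /affine mulmx0 addr0; apply/rowP => k; rewrite !mxE.
Qed.

Lemma Mw_tangent_map {n} (w : 'S_n) (f : 'I_n -> vfield R d) x :
  Mw w (fun i => tangent_map (f i) x) x = Mw w f x.
Proof.
by apply: Mseq_local => [i | i j]; rewrite ?tangent_map_at ?partial_tangent_map.
Qed.

End TangentAffineMap.

Local Open Scope ring_scope.

Theorem proposition4p5 (R : realType) (d n : nat) (hd : (1 <= d)%N)
    (hn : (1 <= n)%N) :
  [/\ (* w |-> l_w is a bijection onto the linear trees in RT(n) *)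
      (forall w : 'S_n, linear_tree (lw w)),
      injective (@lw n),
      (forall E : {set 'I_n * 'I_n}, linear_tree E -> exists w : 'S_n, lw w = E),
      (* F(l_w) = M_w on C_d *)
      (forall (w : 'S_n) (f : 'I_n -> vfield R d),
          (forall i, smooth (f i)) -> Ftree (lw w) f = Mw w f)
    & (* left identities <-> linear relations among F(l_w) *)
      (forall lambda : 'S_n -> R,
          (forall f : 'I_n -> vfield R d, (forall i, witt (f i)) ->
             forall x, \sum_(w : 'S_n) lambda w *: Mw w f x = 0)
          <->
          (forall f : 'I_n -> vfield R d, (forall i, smooth (f i)) ->
             forall x, \sum_(w : 'S_n) lambda w *: Ftree (lw w) f x = 0))].
Proof.
case: n hn => [//|n] _.
split=> [w||E|w f _|lambda].
- exact: lw_linear_tree.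
- exact: lw_inj.
- exact: lw_surj.
- exact: Ftree_lw.
- split=> vanish f _ x; set tangents := fun i => tangent_map (f i) x.
    rewrite -[RHS](vanish tangents (fun i => affine_witt _ _) x).
    by apply: eq_bigr => w _; rewrite Ftree_lw Mw_tangent_map.
  rewrite -[RHS](vanish tangents (fun i => affine_smooth _ _) x).
  by apply: eq_bigr => w _; rewrite Ftree_lw Mw_tangent_map.
Qed.
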